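(* Let $(X,\rho_X)$ be a symmetric rack, $\mathcal F=(A,\phi,\psi,\eta)$ a constant-coefficient $(X,\rho_X)$-module, $\alpha\in Z^2_{SR}((X,\rho_X);A)$, and $E(\mathcal F,\alpha)$ the abelian extension of $(X,\rho_X)$ by $\mathcal F$ through $\alpha$. Then there is an exact sequence of groups $$0\to Z^1_{SR}((X,\rho_X);A)\xrightarrow{\ \iota\ }\operatorname{Aut}_A\big(E(\mathcal F,\alpha),\rho_{E(\mathcal F,\alpha)}\big)\xrightarrow{\ \Gamma\ }\operatorname{Aut}(X,\rho_X)\times\operatorname{Aut}(A)\xrightarrow{\ \Lambda_{[\alpha]}\ }H^2_{SR}((X,\rho_X);A),$$ where $\iota(\lambda)$ is the map $(x,s)\mapsto(x,\lambda(x)+s)$. That is: $\iota$ is an injective group homomorphism with image $\operatorname{Ker}(\Gamma)$, $\Gamma$ is a group homomorphism, and (with $\Lambda_{[\alpha]}$ merely a set map) $\operatorname{Im}(\Gamma)=\Lambda_{[\alpha]}^{-1}(0)$, where $0$ is the identity of $H^2_{SR}((X,\rho_X);A)$.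
   Context: A rack is a set $X$ with binary operation $*$ such that each $x\mapsto x*y$ is bijective (inverse $x\mapsto x*^{-1}y$) and $(x*y)*z=(x*z)*(y*z)$. A symmetric rack $(X,\rho_X)$ is a rack with $\rho_X:X\to X$ such that $\rho_X^2=\mathrm{id}$, $\rho_X(x*y)=\rho_X(x)*y$, $x*\rho_X(y)=x*^{-1}y$. $\operatorname{Aut}(X,\rho_X)$: bijections preserving $*$ and commuting with $\rho_X$. A constant-coefficient $(X,\rho_X)$-module $\mathcal F=(A,\phi,\psi,\eta)$: an abelian group $A$ with group automorphism $\phi$ and endomorphisms $\psi,\eta$ satisfying $\phi\psi=\psi\phi$, $\eta^2=\mathrm{id}$, $\eta\phi=\phi\eta$, $\eta\psi=\psi$, $\phi^2=\mathrm{id}$, $\psi=\phi\psi+\psi^2$, $\phi\psi\eta=-\psi$ (the module axioms with $A_x=A$, $\phi_{x,y}=\phi$, $\psi_{x,y}=\psi$, $\eta_x=\eta$). $\operatorname{Aut}(A)$: group automorphisms of $A$ commuting with $\phi,\psi,\eta$. Cohomology (all groups under pointwise addition): $Z^1_{SR}((X,\rho_X);A)=\{\lambda:X\to A\mid \phi\lambda(x)-\lambda(x*y)+\psi\lambda(y)=0,\ \eta\lambda(z)=\lambda(\rho_X(z))\ \forall x,y,z\}$. $Z^2_{SR}((X,\rho_X);A)$: maps $\sigma:X\times X\to A$ with, for all $x,y,z$: $-\phi\sigma(x,z)+\phi\sigma(x,y)+\sigma(x*y,z)-\sigma(x*z,y*z)-\psi\sigma(y,z)=0$, $\eta\sigma(x,y)=\sigma(\rho_X(x),y)$,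 $\phi\sigma(x*y,\rho_X(y))+\sigma(x,y)=0$. $B^2_{SR}$: maps $(x,y)\mapsto\phi\lambda(x)-\lambda(x*y)+\psi\lambda(y)$ with $\lambda:X\to A$ satisfying $\eta\lambda(x)=\lambda(\rho_X(x))$. $H^2_{SR}=Z^2_{SR}/B^2_{SR}$. Action: for $(\zeta,\theta)\in\operatorname{Aut}(X,\rho_X)\times\operatorname{Aut}(A)$, ${}^{(\zeta,\theta)}\sigma(x,y)=\theta(\sigma(\zeta^{-1}(x),\zeta^{-1}(y)))$ and ${}^{(\zeta,\theta)}[\sigma]=[{}^{(\zeta,\theta)}\sigma]$. $\Lambda_{[\alpha]}(\zeta,\theta)=[\alpha]-{}^{(\zeta,\theta)}[\alpha]$. $E(\mathcal F,\alpha)$ is the symmetric rack on $X\times A$ with $(x,a)*(y,b)=(x*y,\phi(a)+\psi(b)+\alpha(x,y))$ and $\rho_{E(\mathcal F,\alpha)}(x,a)=(\rho_X(x),\eta(a))$. $\operatorname{Aut}_A(E(\mathcal F,\alpha),\rho_{E(\mathcal F,\alpha)})$ is the group of symmetric rack automorphisms $\xi$ of $E(\mathcal F,\alpha)$ of the form $\xi(x,s)=(\zeta(x),\lambda(x)+\theta(s))$ for some $(\zeta,\theta)\in\operatorname{Aut}(X,\rho_X)\times\operatorname{Aut}(A)$ and some map $\lambda:X\to A$; $\Gamma(\xi)=(\zeta,\theta)$. *)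

From mathcomp Require Import all_boot all_algebra.
Set Implicit Arguments.
Unset Strict Implicit.
Unset Printing Implicit Defensive.
Import GRing.Theory.
Local Open Scope ring_scope.

Section SymRack.
Variables (X : Type) (op : X -> X -> X) (rho : X -> X).

Definition is_rack : Prop :=
  (forall y, bijective (fun x => op x y)) /\
  (forall x y z, op (op x y) z = op (op x z) (op y z)).

(* symmetric rack: rho involutive, rho(x*y) = rho(x)*y, and
   x * rho(y) = x *^{-1} y, i.e. (x * rho y) * y = x
   (x *^{-1} y is the unique w with w * y = x). *)
Definition is_symmetric_rack : Prop :=
  is_rack /\
  (forall x, rho (rho x) = x) /\
  (forall x y, rho (op x y) = op (rho x) y) /\
  (forall x y, op (op x (rho y)) y = x).

Definition in_AutX (zeta : X -> X) : Prop :=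
  bijective zeta /\
  (forall x y, zeta (op x y) = op (zeta x) (zeta y)) /\
  (forall x, zeta (rho x) = rho (zeta x)).
End SymRack.

Section Module.
Variables (A : zmodType) (phi psi eta : A -> A).

Definition is_zhom (f : A -> A) : Prop := forall a b, f (a + b) = f a + f b.

Definition is_cc_module : Prop :=
  is_zhom phi /\ bijective phi /\ is_zhom psi /\ is_zhom eta /\
  (forall a, phi (psi a) = psi (phi a)) /\
  (forall a, eta (eta a) = a) /\
  (forall a, eta (phi a) = phi (eta a)) /\
  (forall a, eta (psi a) = psi a) /\
  (forall a, phi (phi a) = a) /\
  (forall a, psi a = phi (psi a) + psi (psi a)) /\
  (forall a, phi (psi (eta a)) = - psi a).

Definition in_AutA (theta : A -> A) : Prop :=
  is_zhom theta /\ bijective theta /\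
  (forall a, theta (phi a) = phi (theta a)) /\
  (forall a, theta (psi a) = psi (theta a)) /\
  (forall a, theta (eta a) = eta (theta a)).

Variables (X : Type) (op : X -> X -> X) (rho : X -> X).

Definition in_Z1 (lam : X -> A) : Prop :=
  (forall x y, phi (lam x) - lam (op x y) + psi (lam y) = 0) /\
  (forall z, eta (lam z) = lam (rho z)).

Definition in_Z2 (sigma : X -> X -> A) : Prop :=
  (forall x y z, - phi (sigma x z) + phi (sigma x y) + sigma (op x y) z
                 - sigma (op x z) (op y z) - psi (sigma y z) = 0) /\
  (forall x y, eta (sigma x y) = sigma (rho x) y) /\
  (forall x y, phi (sigma (op x y) (rho y)) + sigma x y = 0).

Definition in_B2 (sigma : X -> X -> A) : Prop :=
  exists lam : X -> A, (forall x, eta (lam x) = lam (rho x)) /\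
    (forall x y, sigma x y = phi (lam x) - lam (op x y) + psi (lam y)).

(* the action  (zeta,theta).sigma (x,y) = theta (sigma (zeta^-1 x, zeta^-1 y)),
   with zinv the inverse of zeta *)
Definition act2 (zinv : X -> X) (theta : A -> A) (sigma : X -> X -> A) :=
  fun x y => theta (sigma (zinv x) (zinv y)).

(* Lambda_[alpha](zeta,theta) = [alpha] - (zeta,theta).[alpha] is 0 in H^2_SR,
   i.e. alpha - (zeta,theta).alpha lies in B^2_SR. *)
Definition Lambda_zero (alpha : X -> X -> A) (zeta : X -> X) (theta : A -> A)
  : Prop :=
  exists zinv : X -> X, cancel zeta zinv /\ cancel zinv zeta /\
    in_B2 (fun x y => alpha x y - act2 zinv theta alpha x y).

Definition opE (alpha : X -> X -> A) (p q : X * A) : X * A :=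
  (op p.1 q.1, phi p.2 + psi q.2 + alpha p.1 q.1).
Definition rhoE (p : X * A) : X * A := (rho p.1, eta p.2).

Definition in_AutE (alpha : X -> X -> A) (xi : X * A -> X * A) : Prop :=
  bijective xi /\
  (forall p q, xi (opE alpha p q) = opE alpha (xi p) (xi q)) /\
  (forall p, xi (rhoE p) = rhoE (xi p)).

(* xi has the form (x,s) |-> (zeta x, lam x + theta s) with
   (zeta,theta) in Aut(X,rho_X) x Aut(A); i.e. Gamma(xi) = (zeta,theta). *)
Definition Gamma_rel (xi : X * A -> X * A) (zeta : X -> X) (theta : A -> A)
  : Prop :=
  in_AutX op rho zeta /\ in_AutA theta /\
  exists lam : X -> A, forall x s, xi (x, s) = (zeta x, lam x + theta s).

Definition in_AutA_E (alpha : X -> X -> A) (xi : X * A -> X * A) : Prop :=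
  in_AutE alpha xi /\ exists zeta theta, Gamma_rel xi zeta theta.

Definition iota_map (lam : X -> A) : X * A -> X * A :=
  fun p => (p.1, lam p.1 + p.2).
End Module.

(* Write xi(x, s) = (zeta x, lam x + theta s) for (zeta, theta) in
   Aut(X, rho_X) x Aut(A).  Such a map is always bijective, and it is a
   symmetric rack automorphism of E(F, alpha) iff eta o lam = lam o rho_X and
     lam (x * y) + theta (alpha x y)
       = phi (lam x) + psi (lam y) + alpha (zeta x) (zeta y).
   For zeta = theta = id this is the 1-cocycle condition, which gives
   Ker Gamma = Im iota.  In general, evaluating at zeta^-1 x, zeta^-1 y shows
   that such a lam exists iff alpha - (zeta, theta).alpha is the coboundary of
   - lam o zeta^-1, i.e. iff Lambda_[alpha](zeta, theta) = 0. *)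

From mathcomp Require Import all_boot all_algebra.
From Stdlib Require Import FunctionalExtensionality.
Import GRing.Theory.
Set Implicit Arguments.
Unset Strict Implicit.
Unset Printing Implicit Defensive.
Local Open Scope ring_scope.

Section AdditiveMaps.
Variables (A : zmodType) (f : A -> A).
Hypothesis f_add : is_zhom f.

Lemma is_zhom0 : f 0 = 0.
Proof. by apply: (addrI (f 0)); rewrite -f_add !addr0. Qed.

Lemma is_zhomN a : f (- a) = - f a.
Proof. by apply: (addrI (f a)); rewrite -f_add !subrr is_zhom0. Qed.

End AdditiveMaps.

Lemma is_zhom_comp (A : zmodType) (f g : A -> A) :
  is_zhom f -> is_zhom g -> is_zhom (f \o g).
Proof. by move=> f_add g_add a b /=; rewrite g_add f_add. Qed.

Lemma in_AutX_comp (X : Type) (op : X -> X -> X) (rho : X -> X)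
    (zeta1 zeta2 : X -> X) :
  in_AutX op rho zeta1 -> in_AutX op rho zeta2 ->
  in_AutX op rho (zeta1 \o zeta2).
Proof.
move=> [bij1 [op1 rho1]] [bij2 [op2 rho2]]; split; first exact: bij_comp.
by split=> * /=; rewrite ?op2 ?op1 ?rho2 ?rho1.
Qed.

Lemma in_AutA_comp (A : zmodType) (phi psi eta theta1 theta2 : A -> A) :
  in_AutA phi psi eta theta1 -> in_AutA phi psi eta theta2 ->
  in_AutA phi psi eta (theta1 \o theta2).
Proof.
move=> [add1 [bij1 [phi1 [psi1 eta1]]]] [add2 [bij2 [phi2 [psi2 eta2]]]].
split; first exact: is_zhom_comp.
split; first exact: bij_comp.
by split; last split; move=> a /=; rewrite ?phi2 ?phi1 ?psi2 ?psi1 ?eta2 ?eta1.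
Qed.

Lemma in_AutX_id (X : Type) (op : X -> X -> X) (rho : X -> X) :
  in_AutX op rho id.
Proof. by split; [exists id | ]. Qed.

Lemma in_AutA_id (A : zmodType) (phi psi eta : A -> A) :
  in_AutA phi psi eta id.
Proof. by split=> //; split; [exists id | ]. Qed.

Section TriangularMaps.
Variables (X : Type) (A : zmodType).

Definition tri_map (zeta : X -> X) (lam : X -> A) (theta : A -> A) (p : X * A) :
  X * A := (zeta p.1, lam p.1 + theta p.2).

Lemma iota_map_tri (lam : X -> A) : iota_map lam = tri_map id lam id.
Proof. by []. Qed.

Lemma tri_map_bij zeta lam theta :
  bijective zeta -> bijective theta -> bijective (tri_map zeta lam theta).
Proof.
move=> [zinv zK zKV] [tinv tK tKV].
exists (fun p => (zinv p.1, tinv (p.2 - lam (zinv p.1)))) => -[x s] /=.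
  by rewrite zK addrC addKr tK.
by rewrite /tri_map /= zKV tKV addrC subrK.
Qed.

Lemma tri_map_comp zeta1 zeta2 lam1 lam2 theta1 theta2 :
  is_zhom theta1 ->
  tri_map zeta1 lam1 theta1 \o tri_map zeta2 lam2 theta2 =
  tri_map (zeta1 \o zeta2) (fun x => lam1 (zeta2 x) + theta1 (lam2 x))
    (theta1 \o theta2).
Proof.
by move=> theta1_add; apply: functional_extensionality => -[x s];
  rewrite /tri_map /= theta1_add addrA.
Qed.

Lemma tri_map_lam_inj zeta lam1 lam2 theta :
  tri_map zeta lam1 theta = tri_map zeta lam2 theta -> lam1 = lam2.
Proof.
move=> eq_tri; apply: functional_extensionality => x.
exact: addIr (congr1 (fun xi => (xi (x, 0)).2) eq_tri).
Qed.

Variables (op : X -> X -> X) (rho : X -> X) (phi psi eta : A -> A).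

Lemma Gamma_relP xi zeta theta :
  Gamma_rel phi psi eta op rho xi zeta theta <->
  [/\ in_AutX op rho zeta, in_AutA phi psi eta theta &
      exists lam, xi = tri_map zeta lam theta].
Proof.
split=> [[zetaX [thetaA [lam xiE]]] | [zetaX thetaA [lam ->]]].
  split=> //; exists lam; apply: functional_extensionality => -[x s].
  exact: xiE.
by split=> //; split=> //; exists lam.
Qed.

End TriangularMaps.

Section TwistedCocycles.
Variables (X : Type) (op : X -> X -> X) (rho : X -> X).
Variables (A : zmodType) (phi psi eta : A -> A) (alpha : X -> X -> A).
Hypotheses (phi_add : is_zhom phi) (psi_add : is_zhom psi).
Hypothesis eta_add : is_zhom eta.

Definition is_twisted_Z1 (zeta : X -> X) (theta : A -> A) (lam : X -> A) :
    Prop :=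
  (forall x y, lam (op x y) + theta (alpha x y) =
               phi (lam x) + psi (lam y) + alpha (zeta x) (zeta y)) /\
  (forall x, eta (lam x) = lam (rho x)).

Lemma in_Z1_twisted_id lam :
  in_Z1 phi psi eta op rho lam <-> is_twisted_Z1 id id lam.
Proof.
rewrite /in_Z1 /is_twisted_Z1.
have cocycleE x y :
  (phi (lam x) - lam (op x y) + psi (lam y) = 0) <->
  (lam (op x y) + alpha x y = phi (lam x) + psi (lam y) + alpha x y).
  rewrite addrAC; split=> [/eqP | /addIr ->]; last by rewrite subrr.
  by rewrite subr_eq0 => /eqP <-.
by split=> -[cocycle lam_rho]; split=> // x y; apply/cocycleE.
Qed.

Lemma tri_map_opE_morphP zeta lam theta :
  (forall x y, zeta (op x y) = op (zeta x) (zeta y)) ->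
  is_zhom theta -> (forall a, theta (phi a) = phi (theta a)) ->
  (forall a, theta (psi a) = psi (theta a)) ->
  (forall p q, tri_map zeta lam theta (opE phi psi op alpha p q) =
               opE phi psi op alpha (tri_map zeta lam theta p)
                 (tri_map zeta lam theta q))
  <-> (forall x y, lam (op x y) + theta (alpha x y) =
                   phi (lam x) + psi (lam y) + alpha (zeta x) (zeta y)).
Proof.
move=> zeta_op theta_add theta_phi theta_psi.
split=> [morph x y | lift [x a] [y b]].
  have := congr1 snd (morph (x, 0) (y, 0)).
  rewrite /= (is_zhom0 phi_add) (is_zhom0 psi_add) (is_zhom0 theta_add).
  by rewrite !addr0 !add0r.
rewrite /tri_map /opE /=; congr pair; first exact: zeta_op.
rewrite !theta_add theta_phi theta_psi phi_add psi_add.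
by rewrite addrCA lift addrC (addrACA (phi (lam x))) [RHS]addrAC.
Qed.

Lemma tri_map_rhoE_morphP zeta lam theta :
  (forall x, zeta (rho x) = rho (zeta x)) ->
  is_zhom theta -> (forall a, theta (eta a) = eta (theta a)) ->
  (forall p, tri_map zeta lam theta (rhoE eta rho p) =
             rhoE eta rho (tri_map zeta lam theta p))
  <-> (forall x, eta (lam x) = lam (rho x)).
Proof.
move=> zeta_rho theta_add theta_eta; split=> [morph x | lam_rho [x a]].
  have := congr1 snd (morph (x, 0)).
  by rewrite /= (is_zhom0 eta_add) (is_zhom0 theta_add) !addr0 => <-.
by rewrite /tri_map /rhoE /=; congr pair; rewrite // eta_add theta_eta lam_rho.
Qed.

Lemma in_AutE_tri_mapP zeta lam theta :
  in_AutX op rho zeta -> in_AutA phi psi eta theta ->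
  in_AutE phi psi eta op rho alpha (tri_map zeta lam theta) <->
  is_twisted_Z1 zeta theta lam.
Proof.
move=> [zeta_bij [zeta_op zeta_rho]].
move=> [theta_add [theta_bij [theta_phi [theta_psi theta_eta]]]].
have opP := tri_map_opE_morphP lam zeta_op theta_add theta_phi theta_psi.
have rhoP := tri_map_rhoE_morphP lam zeta_rho theta_add theta_eta.
split=> [[_ [/opP lift /rhoP lam_rho]] // | [/opP morph /rhoP rho_morph]].
by split=> //; apply: tri_map_bij.
Qed.

Lemma twisted_Z1_B2P zeta zinv theta :
  (forall x y, zeta (op x y) = op (zeta x) (zeta y)) ->
  (forall x, zeta (rho x) = rho (zeta x)) ->
  cancel zeta zinv -> cancel zinv zeta ->
  (exists lam, is_twisted_Z1 zeta theta lam) <->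
  in_B2 phi psi eta op rho (fun x y => alpha x y - act2 zinv theta alpha x y).
Proof.
move=> zeta_op zeta_rho zetaK zinvK.
have zinv_op x y : zinv (op x y) = op (zinv x) (zinv y).
  by apply: (can_inj zetaK); rewrite zeta_op !zinvK.
have zinv_rho x : zinv (rho x) = rho (zinv x).
  by apply: (can_inj zetaK); rewrite zeta_rho !zinvK.
rewrite /in_B2 /act2; split=> [[lam [lift lam_rho]] | [mu [mu_rho cobound]]].
  exists (fun x => - lam (zinv x)); split=> [x | x y].
    by rewrite (is_zhomN eta_add) lam_rho zinv_rho.
  rewrite (is_zhomN phi_add) (is_zhomN psi_add) zinv_op opprK.
  have /(canRL (addrK _)) -> := lift (zinv x) (zinv y).
  by rewrite !zinvK 2!addrA addKr (addrAC (psi _ + _)) [psi _ + _]addrC addrK.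
exists (fun x => - mu (zeta x)); split=> [x y | x].
  rewrite zeta_op (is_zhomN phi_add) (is_zhomN psi_add).
  have /(canRL (subrK _)) -> := cobound (zeta x) (zeta y).
  by rewrite !zetaK addrACA [- phi _ + _]addrA addKr addrA addrK.
by rewrite (is_zhomN eta_add) mu_rho zeta_rho.
Qed.

Lemma AutA_E_Gamma_relP xi zeta theta :
  in_AutA_E phi psi eta op rho alpha xi /\
    Gamma_rel phi psi eta op rho xi zeta theta <->
  [/\ in_AutX op rho zeta, in_AutA phi psi eta theta &
      exists2 lam, is_twisted_Z1 zeta theta lam & xi = tri_map zeta lam theta].
Proof.
split=> [[[xiE _] /Gamma_relP [zetaX thetaA [lam xi_tri]]] |
         [zetaX thetaA [lam lift xi_tri]]].
  split=> //; exists lam => //.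
  by apply/(in_AutE_tri_mapP lam zetaX thetaA); rewrite -xi_tri.
have xiG : Gamma_rel phi psi eta op rho xi zeta theta.
  by apply/Gamma_relP; split=> //; exists lam.
split=> //; split; last by exists zeta, theta.
by rewrite xi_tri; apply/in_AutE_tri_mapP.
Qed.

End TwistedCocycles.

Theorem theorem6p7
  (X : Type) (op : X -> X -> X) (rho : X -> X)
  (A : zmodType) (phi psi eta : A -> A) (alpha : X -> X -> A)
  (HX : is_symmetric_rack op rho)
  (HF : is_cc_module phi psi eta)
  (Halpha : in_Z2 phi psi eta op rho alpha) :
  (* iota is a well-defined map Z^1 -> Aut_A(E) *)
  (forall lam, in_Z1 phi psi eta op rho lam ->
     in_AutA_E phi psi eta op rho alpha (iota_map lam)) /\
  (* iota is a group homomorphism *)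
  (forall lam1 lam2, in_Z1 phi psi eta op rho lam1 ->
     in_Z1 phi psi eta op rho lam2 ->
     iota_map (fun x => lam1 x + lam2 x) = iota_map lam1 \o iota_map lam2) /\
  (* iota is injective *)
  (forall lam1 lam2, in_Z1 phi psi eta op rho lam1 ->
     in_Z1 phi psi eta op rho lam2 ->
     iota_map lam1 = iota_map lam2 -> lam1 = lam2) /\
  (* Im(iota) = Ker(Gamma) *)
  (forall xi, in_AutA_E phi psi eta op rho alpha xi ->
     (Gamma_rel phi psi eta op rho xi id id <->
      exists lam, in_Z1 phi psi eta op rho lam /\ xi = iota_map lam)) /\
  (* Gamma is a group homomorphism *)
  (forall xi1 xi2 zeta1 zeta2 theta1 theta2,
     in_AutA_E phi psi eta op rho alpha xi1 ->
     in_AutA_E phi psi eta op rho alpha xi2 ->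
     Gamma_rel phi psi eta op rho xi1 zeta1 theta1 ->
     Gamma_rel phi psi eta op rho xi2 zeta2 theta2 ->
     Gamma_rel phi psi eta op rho (xi1 \o xi2) (zeta1 \o zeta2)
       (theta1 \o theta2)) /\
  (* Im(Gamma) = Lambda_[alpha]^{-1}(0) *)
  (forall zeta theta, in_AutX op rho zeta -> in_AutA phi psi eta theta ->
     ((exists xi, in_AutA_E phi psi eta op rho alpha xi /\
                  Gamma_rel phi psi eta op rho xi zeta theta) <->
      Lambda_zero phi psi eta op rho alpha zeta theta)).
Proof.
have [phi_add [_ [psi_add [eta_add _]]]] := HF.
have fiberP := AutA_E_Gamma_relP op rho alpha phi_add psi_add eta_add.
have Z1P := in_Z1_twisted_id op rho phi psi eta alpha.
have idX := in_AutX_id op rho; have idA := in_AutA_id phi psi eta.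
split=> [lam /Z1P lift | ].
  by apply: (proj1 ((fiberP _ id id).2 _)); split=> //; exists lam.
split=> [lam1 lam2 _ _ | ]; first by rewrite !iota_map_tri tri_map_comp.
split=> [lam1 lam2 _ _ | ]; first by rewrite !iota_map_tri => /tri_map_lam_inj.
split=> [xi xiE | ].
  split=> [xiG | [lam [/Z1P lift ->]]].
    by have [_ _ [lam /Z1P]] := (fiberP xi id id).1 (conj xiE xiG); exists lam.
  by apply: (proj2 ((fiberP _ id id).2 _)); split=> //; exists lam.
split=> [xi1 xi2 zeta1 zeta2 theta1 theta2 _ _ | zeta theta zetaX thetaA].
  move=> /Gamma_relP [zeta1X theta1A [lam1 ->]].
  move=> /Gamma_relP [zeta2X theta2A [lam2 ->]].
  apply/Gamma_relP; split; [exact: in_AutX_comp | exact: in_AutA_comp |].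
  by eexists; apply: tri_map_comp; case: theta1A.
have [[zinv zetaK zinvK] [zeta_op zeta_rho]] := zetaX.
have B2P := twisted_Z1_B2P alpha phi_add psi_add eta_add theta zeta_op zeta_rho.
split=> [[xi /fiberP [_ _ [lam lift _]]] | [zinv' [zetaK' [zinvK' cobound]]]].
  by exists zinv; split=> //; split=> //; apply/(B2P _ zetaK zinvK); exists lam.
have [lam lift] := (B2P _ zetaK' zinvK').2 cobound.
by exists (tri_map zeta lam theta); apply/fiberP; split=> //; exists lam.
Qed.
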